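(* Let $X$ be a locally compact Hausdorff topological space, $Y$ a $T_1$-space whose set of branch points is locally finite, and $p:X\to Y$ an open continuous surjective map. Then $p$ has properties (COMP) and (CONT).
   Context: Two points of $Y$ are $T_2$-disjoint if they have disjoint neighborhoods; $y\in Y$ is a branch point if some $z\neq y$ is not $T_2$-disjoint from $y$. A subset $A\subset Y$ is locally finite if each point of $Y$ has a neighborhood meeting $A$ in finitely many points. Let $\Delta=\{p^{-1}(y):y\in Y\}$ (note $p$, being open continuous surjective, is a factor map). A $\Delta$-map is a continuous $h:X\to X$ mapping each element of $\Delta$ into some element of $\Delta$; $\mathrm{End}(X,\Delta)$ is the monoid of $\Delta$-maps, $\mathrm{End}(Y)=C(Y,Y)$, and $\psi(h)$ is the unique map with $p\circ h=\psi(h)\circ p$. Property (COMP): for every compact $L\subset Y$ there is a compact $K\subset X$ with $p(K)=L$. Property (CONT): $\psi:\mathrm{End}(X,\Delta)\to\mathrm{End}(Y)$ is continuous with respect to compact open topologies (generated by subbasic sets $\{f: f(K)\subset U\}$, $K$ compact, $U$ open). *)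

From HB Require Import structures.
From mathcomp Require Import all_boot all_order.
From mathcomp Require Import all_classical all_reals all_analysis.
Set Implicit Arguments. Unset Strict Implicit. Unset Printing Implicit Defensive.
Local Open Scope classical_set_scope.

Section Defs.
Context {X Y : topologicalType}.

Definition open_map (p : X -> Y) := forall U : set X, open U -> open (p @` U).

Definition T2_disjoint (y z : Y) :=
  exists U V : set Y, [/\ nbhs y U, nbhs z V & U `&` V = set0].

Definition branch_point (y : Y) := exists z : Y, z <> y /\ ~ T2_disjoint y z.

Definition locally_finite_set (A : set Y) :=
  forall y : Y, exists N : set Y, nbhs y N /\ finite_set (N `&` A).

Definition Delta_map (p : X -> Y) (h : X -> X) :=
  continuous h /\
  forall y : Y, exists y' : Y, h @` (p @^-1` [set y]) `<=` p @^-1` [set y'].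

Definition COMP (p : X -> Y) :=
  forall L : set Y, compact L -> exists K : set X, compact K /\ p @` K = L.
End Defs.

(* Open sets of the compact-open topology on a set M of functions S -> T,
   i.e. of the topology on M generated by the subbasic sets
   {f in M | f(K) ⊆ U}, K compact, U open: W is open iff every h in W
   has a finite intersection of subbasic sets containing h and inside W. *)
Definition co_open {S T : topologicalType} (M : set (S -> T)) (W : set (S -> T)) :=
  W `<=` M /\
  forall h, W h -> exists l : seq (set S * set T),
    (forall KU, KU \in l -> compact KU.1 /\ open KU.2) /\
    (forall KU, KU \in l -> h @` KU.1 `<=` KU.2) /\
    (forall f, M f -> (forall KU, KU \in l -> f @` KU.1 `<=` KU.2) -> W f).

(* Property (CONT): psi : End(X,Delta) -> End(Y) is continuous for the
   compact-open topologies.  psi is given as any function satisfying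
   p \o h = psi h \o p for every Delta-map h (this determines psi h uniquely
   as p is surjective). *)
Definition CONT {X Y : topologicalType} (p : X -> Y) :=
  forall psi : (X -> X) -> (Y -> Y),
    (forall h, Delta_map p h -> p \o h = psi h \o p) ->
    forall W : set (Y -> Y), co_open [set g : Y -> Y | continuous g] W ->
      co_open [set h | Delta_map p h] [set h | Delta_map p h /\ W (psi h)].

From HB Require Import structures.
From mathcomp Require Import all_boot all_order.
From mathcomp Require Import all_classical all_reals all_analysis.
From mathcomp Require Import finmap.
Local Open Scope classical_set_scope.

(* Every y has a neighbourhood V y containing no branch point other
   than y (T1 + local finiteness), and a compact K y ⊆ p^-1(V y) whose image
   is a neighbourhood of y (local compactness + openness of p).  Given a
   compact L, finitely many images p(K y), y ∈ L, cover L; let Kb be the union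
   of the corresponding K y.  Then K = Kb ∩ p^-1(closure L) is compact and
   p(K) = L: a point of closure L outside the compact set L is a branch point,
   but every point of p(Kb) lies in some V y with y ∈ L, whose only possible
   branch point is y itself.

   This follows from (COMP) alone: a subbasic condition
   psi h (K) ⊆ U for Y is equivalent to the subbasic condition
   h (K') ⊆ p^-1(U) for X, where K' is a compact lift of K given by (COMP);
   and psi h is continuous because an open surjection is a quotient map. *)

(* In a topological type, compactness yields finite subcovers.  The library
   states this for pointed spaces; a nonempty set provides a point. *)
Section CompactCover.
Variables (T : topologicalType) (t0 : T).

Local Definition pointedT : Type := T.
HB.instance Definition _ := Topological.on pointedT.
HB.instance Definition _ := isPointed.Build pointedT t0.

Lemma compact_cover_pointed (A : set T) : compact A -> cover_compact A.
Proof. by move=> cA; have : @compact pointedT A := cA; rewrite compact_cover. Qed.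

End CompactCover.

Lemma compact_cover_compact {T : topologicalType} {A : set T} :
  compact A -> cover_compact A.
Proof.
move=> cA; have [[t0 _]|A0] := pselect (exists t, A t).
  exact: (@compact_cover_pointed T t0).
by move=> I D f _ _; exists fset0 => // t At; case: A0; exists t.
Qed.

Lemma compact_nbhs_inside {X : topologicalType} {x : X} {U : set X} :
  hausdorff_space X -> locally_compact [set: X] -> nbhs x U ->
  exists K, [/\ compact K, nbhs x K & K `<=` U].
Proof.
move=> hX lcX Ux.
have [C Cx [cC _]] := lcX x I; rewrite withinET in Cx.
have regx := compact_regular hX cC Cx.
have [A Ax AU] := regx U Ux.
exists (C `&` closure A); split.
- exact: compact_closedI cC (@closed_closure _ A).
- by apply: filterI => //; apply: filterS Ax; exact: subset_closure.
- by move=> z [_ /AU].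
Qed.

Lemma branch_isolating_nbhs {Y : topologicalType} (y : Y) :
  accessible_space Y -> locally_finite_set [set z : Y | branch_point z] ->
  exists V : set Y, nbhs y V /\ forall z, V z -> branch_point z -> z = y.
Proof.
move=> aY lfY; have [N [Ny fN]] := lfY y.
pose F := (N `&` [set z | branch_point z]) `\ y.
have cF : closed F by apply: (accessible_finite_set_closed.1 aY); exact: finite_setD.
exists (N `&` ~` F); split.
  apply: filterI => //; apply: open_nbhs_nbhs; split; first by rewrite openC.
  by move=> [_]; apply.
by move=> z [Nz nFz] bz; apply: contrapT => zy; apply: nFz.
Qed.

(* A point in the closure of a compact set L but outside L is a branch point:
   it cannot be separated from a cluster point of L. *)
Lemma closure_compact_branch {Y : topologicalType} {L : set Y} {w : Y} :
  compact L -> closure L w -> ~ L w -> branch_point w.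
Proof.
move=> cL clw nLw.
have PF : ProperFilter (within L (nbhs w)) by exact: within_nbhs_proper.
have [|z [Lz cz]] := cL (within L (nbhs w)) PF; first exact: nearW.
exists z; split; first by move=> zw; apply: nLw; rewrite -zw.
move=> [U [V [Uw Vz UV]]].
have [|t UVt] := cz U V _ Vz; first by apply: filterS Uw => t Ut _.
by rewrite -[False]/(set0 t) -UV.
Qed.

Lemma compact_lift_nbhs {X Y : topologicalType} (p : X -> Y) (x : X) (V : set Y) :
  hausdorff_space X -> locally_compact [set: X] ->
  continuous p -> open_map p -> nbhs (p x) V ->
  exists K : set X, [/\ compact K, nbhs (p x) (p @` K) & K `<=` p @^-1` V].
Proof.
move=> hX lcX cp op Vpx.
have [K [cK Kx KV]] := compact_nbhs_inside hX lcX (cp x _ Vpx).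
exists K; split => //.
apply: (@filterS _ _ _ (p @` K°)); first by move=> _ [z /interior_subset Kz <-]; exists z.
apply: open_nbhs_nbhs; split; first exact/op/open_interior.
by exists x.
Qed.

Lemma compact_lift_cover {X Y : topologicalType} {p : X -> Y}
    {L : set Y} {K S : Y -> set X} :
  compact L ->
  (forall y, L y -> [/\ compact (K y), nbhs y (p @` K y) & K y `<=` S y]) ->
  exists Kb : set X, [/\ compact Kb, L `<=` p @` Kb & Kb `<=` \bigcup_(y in L) S y].
Proof.
move=> cL hK.
have [D DL LD] : finite_subset_cover L (fun y => (p @` K y)°) L.
  apply: (compact_cover_compact cL) => [y _|y Ly]; first exact: open_interior.
  by exists y => //; case: (hK y Ly) => _ Ny _; exact: Ny.
have {}DL y : y \in D -> L y by move=> /DL; rewrite in_setE.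
exists (\bigcup_(y in [set` D]) K y); split.
- rewrite bigcup_fset big_seq; apply: bigsetU_compact => y /DL Ly.
  by case: (hK y Ly).
- move=> z /LD[y Dy /interior_subset[x Kx <-]].
  by exists x => //; exists y.
- move=> x [y /DL Ly Kx]; exists y => //.
  by case: (hK y Ly) => _ _; apply.
Qed.

Lemma open_surjection_COMP {X Y : topologicalType} (p : X -> Y) :
  hausdorff_space X -> locally_compact [set: X] -> accessible_space Y ->
  locally_finite_set [set y : Y | branch_point y] ->
  continuous p -> open_map p -> (forall y, exists x, p x = y) -> COMP p.
Proof.
move=> hX lcX aY lfY cp op sp L cL.
have /choice[V hV] := fun y : Y => branch_isolating_nbhs y aY lfY.
have /choice[K hK] : forall y : Y, exists K : set X,
    [/\ compact K, nbhs y (p @` K) & K `<=` p @^-1` V y].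
  by move=> y; have [x <-] := sp y; exact: compact_lift_nbhs hX lcX cp op (hV _).1.
have [Kb [cKb LpKb KbV]] := compact_lift_cover cL (fun y _ => hK y).
exists (Kb `&` p @^-1` closure L); split.
  apply: compact_closedI cKb _; apply: preimage_closed; last exact: closed_closure.
  by move=> x _; exact: cp.
apply/seteqP; split.
  move=> _ [x [Kbx clx] <-]; apply: contrapT => nLpx.
  have [y Ly Vpx] := KbV x Kbx.
  have pxy := (hV y).2 _ Vpx (closure_compact_branch cL clx nLpx).
  by apply: nLpx; rewrite pxy.
move=> y Ly; have [x Kbx pxy] := LpKb y Ly; exists x => //; split => //.
by rewrite /preimage/= pxy; exact: subset_closure.
Qed.

Lemma open_surjection_quotient {X Y Z : topologicalType} {p : X -> Y} {g : Y -> Z} :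
  open_map p -> (forall y, exists x, p x = y) -> continuous (g \o p) -> continuous g.
Proof.
move=> op sp cgp; apply/continuousP => A oA.
have -> : g @^-1` A = p @` ((g \o p) @^-1` A).
  apply/seteqP; split=> [y gAy|_ [x gpAx <-]//].
  by have [x pxy] := sp y; exists x => //=; rewrite /preimage/= pxy.
by apply: op; move/continuousP: cgp; apply.
Qed.

Section InducedMap.
Context {X Y : topologicalType} {p : X -> Y} {h : X -> X} {g : Y -> Y}.
Hypothesis induced : p \o h = g \o p.

Lemma induced_apply (x : X) : g (p x) = p (h x).
Proof. by have /(congr1 (fun f => f x)) := induced. Qed.

Lemma induced_continuous : open_map p -> (forall y, exists x, p x = y) ->
  continuous p -> continuous h -> continuous g.
Proof.
move=> op sp cp ch; apply: (open_surjection_quotient op sp).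
by rewrite -induced => x; apply: continuous_comp; [exact: ch|exact: cp].
Qed.

Lemma induced_image_subset {K' : set X} {K : set Y} (U : set Y) :
  p @` K' = K -> (g @` K `<=` U <-> h @` K' `<=` p @^-1` U).
Proof.
move=> <-; split.
  by move=> gKU _ [x K'x <-]; rewrite /preimage/= -induced_apply; apply: gKU; exists (p x).
move=> hKU _ [_ [x K'x <-] <-]; rewrite induced_apply; apply: (hKU (h x)).
by exists x.
Qed.

End InducedMap.

(* (CONT) follows from (COMP) for any open continuous surjection: each
   subbasic neighbourhood {g | g(K) ⊆ U} of psi h is pulled back to the
   subbasic neighbourhood {f | f(K') ⊆ p^-1(U)} of h, K' a compact lift of K. *)
Lemma COMP_CONT {X Y : topologicalType} (p : X -> Y) :
  COMP p -> continuous p -> open_map p -> (forall y, exists x, p x = y) -> CONT p.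
Proof.
move=> compp cp op sp psi hpsi W [_ hW]; split; first by move=> h [].
have /choice[lift hlift] : forall L : set Y,
    exists K : set X, compact L -> compact K /\ p @` K = L.
  move=> L; have [/compp[K hK]|ncL] := pselect (compact L); first by exists K.
  by exists set0.
move=> h [Dh Wh]; have [l [lKU [lh lW]]] := hW _ Wh.
exists [seq (lift KU.1, p @^-1` KU.2) | KU <- l]; split; [|split].
- move=> _ /mapP[KU KUl ->]; have [cK oU] := lKU KU KUl; split => /=.
    by have [] := hlift _ cK.
  by move/continuousP: cp; apply.
- move=> _ /mapP[KU KUl ->] /=; have [cK _] := lKU KU KUl.
  by rewrite -(induced_image_subset (hpsi h Dh) _ (hlift _ cK).2); exact: lh.
- move=> f Df hf; split => //; apply: lW.
    exact: induced_continuous (hpsi f Df) op sp cp Df.1.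
  move=> KU KUl; have [cK _] := lKU KU KUl.
  rewrite (induced_image_subset (hpsi f Df) _ (hlift _ cK).2).
  apply: (hf (lift KU.1, p @^-1` KU.2)).
  by apply/mapP; exists KU.
Qed.

Theorem mainTheorem8 (X Y : topologicalType) (p : X -> Y) :
  hausdorff_space X -> locally_compact [set: X] ->
  accessible_space Y ->
  locally_finite_set [set y : Y | branch_point y] ->
  continuous p -> open_map p -> (forall y : Y, exists x : X, p x = y) ->
  COMP p /\ CONT p.
Proof.
move=> hX lcX aY lfY cp op sp.
have compp : COMP p by exact: open_surjection_COMP.
by split => //; exact: COMP_CONT.
Qed.
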